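(* Let $P$ be a finite poset with labeling $\omega:P\to\{1,\dots,p\}$ such that $P$ is $\omega$-consistent with rank function $\rho$, and assume $\omega(x)<\omega(y)$ whenever $\rho(x)<\rho(y)$. Let $x,y\in P$ be incomparable with $\rho(y)=\rho(x)+1$. Let $P'$ be the poset on the same set whose order is the transitive closure of the covering relations of $P$ together with $x\prec y$, and $P''$ the poset whose order is the transitive closure of the covering relations of $P$ together with $y\prec x$. Then $P'$ and $P''$, labeled by the same $\omega$, are $\omega$-consistent and have the same rank function $\rho$ as $(P,\omega)$.
   Context: Write $x\prec y$ if $y$ covers $x$ and $E(P)=\{(x,y):x\prec y\}$. A labeling $\omega$ induces $\epsilon:E(P)\to\{-1,1\}$ with $\epsilon(x,y)=1$ if $\omega(x)<\omega(y)$ and $-1$ otherwise. $P$ is $\epsilon$-graded ($\omega$-graded) if $\sum_{i=1}^n\epsilon(x_{i-1},x_i)$ is the same for every maximal chain $x_0\prec\cdots\prec x_n$. $P$ is $\omega$-consistent if each principal ideal $\Lambda_z=\{w\le z\}$ is graded with respect to the restriction of $\epsilon$ to $E(\Lambda_z)$; the rank function is $\rho(z)=$ this common sum for $\Lambda_z$, i.e. the $\epsilon$-weight of any saturated chain from a minimal element of $P$ to $z$. For $P'$ and $P''$, $\epsilon$ and $\rho$ are computed from their own covering relations with the same $\omega$. *)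

From mathcomp Require Import all_boot all_order all_algebra.
Set Implicit Arguments. Unset Strict Implicit. Unset Printing Implicit Defensive.
Import GRing.Theory Num.Theory.
Local Open Scope ring_scope.

Definition is_poset (T : finType) (le : rel T) : Prop :=
  reflexive le /\ antisymmetric le /\ transitive le.

(* A labeling: a bijection onto {1,...,p} with p = #|T|. *)
Definition is_labeling (T : finType) (w : T -> nat) : Prop :=
  injective w /\ forall t, (1 <= w t <= #|T|)%N.

Definition strict (T : finType) (le : rel T) (a b : T) : bool := (a != b) && le a b.

Definition coverS (T : finType) (le : rel T) (S : {set T}) (a b : T) : bool :=
  [&& a \in S, b \in S, strict le a b &
      [forall c, ~~ [&& c \in S, strict le a c & strict le c b]]].

Definition cover (T : finType) (le : rel T) (a b : T) : bool :=
  coverS le [set: T] a b.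

Definition minimalS (T : finType) (le : rel T) (S : {set T}) (a : T) : bool :=
  (a \in S) && [forall b, (b \in S) ==> ~~ strict le b a].

Definition maximalS (T : finType) (le : rel T) (S : {set T}) (a : T) : bool :=
  (a \in S) && [forall b, (b \in S) ==> ~~ strict le a b].

Definition maxchain (T : finType) (le : rel T) (S : {set T}) (c : seq T) : Prop :=
  match c with
  | [::] => False
  | x0 :: s => [/\ path (coverS le S) x0 s, minimalS le S x0 & maximalS le S (last x0 s)]
  end.

Definition eps (T : finType) (w : T -> nat) (a b : T) : int :=
  if (w a < w b)%N then 1 else -1.

Definition weight (T : finType) (w : T -> nat) (c : seq T) : int :=
  \sum_(p <- zip c (behead c)) eps w p.1 p.2.

Definition graded (T : finType) (le : rel T) (w : T -> nat) (S : {set T}) : Prop :=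
  forall c1 c2, maxchain le S c1 -> maxchain le S c2 -> weight w c1 = weight w c2.

Definition ideal (T : finType) (le : rel T) (z : T) : {set T} := [set u | le u z].

Definition consistent (T : finType) (le : rel T) (w : T -> nat) : Prop :=
  forall z, graded le w (ideal le z).

Definition rank_fun (T : finType) (le : rel T) (w : T -> nat) (rho : T -> int) : Prop :=
  forall z c, maxchain le (ideal le z) c -> weight w c = rho z.

Definition add_cover (T : finType) (le : rel T) (a b : T) : rel T :=
  connect (fun u v => cover le u v || ((u == a) && (v == b))).

From Pilot Require Import Defs.
From mathcomp Require Import all_boot all_order all_algebra.
Set Implicit Arguments. Unset Strict Implicit. Unset Printing Implicit Defensive.
Import GRing.Theory Num.Theory.
Local Open Scope ring_scope.

(* Covers of P satisfy rho v = rho u + eps(u, v), since a maximal chain of the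
   ideal below u ending in u extends by v; the added edge x < y (or y < x)
   satisfies the same identity because rho y = rho x + 1 and w x < w y.  In the
   order generated by a relation E every cover inside a principal ideal is an
   E-edge, so the weight of a maximal chain of an ideal of P' or P'' below z
   telescopes to rho z - rho x0.  Its bottom x0 has no cover of P below it,
   hence is minimal in P and rho x0 = 0. *)

Section ConnectIdeals.
Variables (T : finType) (E : rel T).

Lemma coverS_ideal_connect z u v :
  coverS (connect E) (ideal (connect E) z) u v -> E u v.
Proof.
case/and4P=> _ /[!inE] vz /andP[uv_neq /connectP[p p_path v_last]] /forallP no_between.
move: v_last uv_neq vz no_between; case: (shortenP p_path) => -[|c [|d q]] //=.
- by move=> _ _ _ ->; rewrite eqxx.
- by rewrite andbT => uc _ _ ->.
move=> /and3P[uc cd dq] /and3P[u_notin c_notin _] _ -> _ vz no_between.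
have cv : connect E c (last d q) by apply/connectP; exists (d :: q) => //=; rewrite cd.
have uc_neq : u != c by apply: contraNneq u_notin => ->; rewrite mem_head.
have cv_neq : c != last d q by apply: contraNneq c_notin => ->; rewrite mem_last.
case/and3P: (no_between c).
by rewrite inE (connect_trans cv vz) /strict cv uc_neq cv_neq connect1.
Qed.

Lemma maxchain_ideal_last (R : rel T) z x0 s :
  reflexive R -> maxchain R (ideal R z) (x0 :: s) -> last x0 s = z.
Proof.
move=> refl_R [_ _ /andP[]]; rewrite inE => lz /forallP/(_ z).
by rewrite inE refl_R /strict lz andbT negbK => /eqP.
Qed.

Lemma minimalS_ideal_bottom (R : rel T) z x0 b :
  transitive R -> minimalS R (ideal R z) x0 -> R b x0 -> b = x0.
Proof.
move=> trans_R /andP[]; rewrite inE => x0z /forallP/(_ b) + bx0.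
by rewrite inE (trans_R _ _ _ bx0 x0z) /strict bx0 andbT negbK => /eqP.
Qed.

End ConnectIdeals.

Section Weights.

Variables (T : finType) (w : T -> nat).

Lemma weight1 a : weight w [:: a] = 0.
Proof. by rewrite /weight big_nil. Qed.

Lemma weight_cons2 a b s : weight w [:: a, b & s] = eps w a b + weight w (b :: s).
Proof. by rewrite /weight big_cons. Qed.

Lemma weight_rcons x0 s b :
  weight w (x0 :: rcons s b) = weight w (x0 :: s) + eps w (last x0 s) b.
Proof.
elim: s x0 => [|y s IHs] x0 /=; first by rewrite weight_cons2 !weight1 addr0 add0r.
by rewrite !weight_cons2 IHs addrA.
Qed.

Variables (R : rel T) (rho : T -> int).
Hypothesis rho_edge : forall u v, R u v -> rho v = rho u + eps w u v.

Lemma weight_path x0 s : path R x0 s -> weight w (x0 :: s) = rho (last x0 s) - rho x0.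
Proof.
elim: s x0 => [|y s IHs] x0 /=; first by rewrite weight1 subrr.
case/andP=> /rho_edge x0y /IHs; rewrite weight_cons2 x0y => ->.
by rewrite addrC opprD addrA subrK.
Qed.

Lemma rank_fun_connect :
  (forall m, (forall b, R b m -> b = m) -> rho m = 0) -> rank_fun (connect R) w rho.
Proof.
move=> rho_bottom z [//|x0 s] chain.
have [s_path x0_min _] := chain.
rewrite (weight_path (sub_path (@coverS_ideal_connect _ R z) s_path)).
rewrite (maxchain_ideal_last (@connect0 _ R) chain) (rho_bottom x0) ?subr0 //.
move=> b /connect1.
exact: minimalS_ideal_bottom (@connect_trans _ R) x0_min.
Qed.

End Weights.

Section PosetChains.

Variables (T : finType) (le : rel T).
Hypotheses (refl_le : reflexive le) (anti_le : antisymmetric le)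
  (trans_le : transitive le).

Lemma strict_trans : transitive (strict le).
Proof.
move=> b a c /andP[ab_neq le_ab] /andP[bc_neq le_bc].
rewrite /strict (trans_le le_ab le_bc) andbT.
apply: contraNneq ab_neq => eq_ac; subst c.
by apply/eqP/anti_le; rewrite le_ab.
Qed.

Let lower z := [set v | strict le v z].

Lemma card_lower_lt b z : strict le b z -> (#|lower b| < #|lower z|)%N.
Proof.
move=> bz; apply/proper_card/properP; split.
  by apply/subsetP => v; rewrite !inE => /strict_trans; apply.
by exists b; rewrite !inE // /strict eqxx.
Qed.

Lemma exists_cover_below b0 z : strict le b0 z -> exists b, Defs.cover le b z.
Proof.
move=> b0z; have [b bz b_max] := @arg_maxnP _ _ (strict le^~ z) (fun u => #|lower u|) b0z.
exists b; rewrite /Defs.cover /coverS !inE bz.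
apply/forallP => c; rewrite in_setT; apply/and3P => -[_ bc cz].
have := b_max c cz; apply/negP.
by rewrite -ltnNge card_lower_lt.
Qed.

Lemma coverS_idealE z u v :
  le v z -> coverS le (ideal le z) u v = Defs.cover le u v.
Proof.
move=> vz; rewrite /Defs.cover /coverS !inE vz.
case uv: (strict le u v); last by rewrite !andbF.
rewrite (trans_le (andP uv).2 vz) /=; apply: eq_forallb => c; rewrite !inE.
by case: (boolP (strict le c v)) => [/andP[_ cv]|]; rewrite ?andbF ?(trans_le cv vz).
Qed.

Lemma maximalS_ideal z : maximalS le (ideal le z) z.
Proof.
rewrite /maximalS inE refl_le; apply/forallP => c; rewrite inE.
apply/implyP => cz; apply/andP => -[zc_neq zc].
by move: zc_neq; rewrite (@anti_le z c) ?zc ?eqxx.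
Qed.

Lemma minimalS_ideal_mono a b x0 :
  le a b -> minimalS le (ideal le a) x0 -> minimalS le (ideal le b) x0.
Proof.
rewrite /minimalS !inE => ab /andP[x0a x0_min]; rewrite (trans_le x0a ab).
apply/forallP => c; rewrite inE; apply/implyP => _.
have := forallP x0_min c; rewrite inE; apply: contraTN => cx0.
by rewrite cx0 (trans_le (andP cx0).2 x0a).
Qed.

Lemma maxchain_ideal1 m :
  (forall b, ~~ strict le b m) -> maxchain le (ideal le m) [:: m].
Proof.
move=> m_min; split; rewrite //= ?maximalS_ideal // /minimalS inE refl_le.
by apply/forallP => b; rewrite implybE m_min orbT.
Qed.

Lemma maxchain_ideal_rcons a b x0 s :
  maxchain le (ideal le a) (x0 :: s) -> last x0 s = a -> Defs.cover le a b ->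
  maxchain le (ideal le b) (x0 :: rcons s b).
Proof.
move=> [s_path x0_min _] s_last ab.
have le_ab : le a b by case/and4P: ab => _ _ /andP[].
split; last by rewrite last_rcons maximalS_ideal.
- rewrite rcons_path s_last coverS_idealE ?refl_le // ab andbT.
  apply: sub_path s_path => u v uv.
  have /and4P[_ + _ _] := uv; rewrite inE => va.
  by rewrite coverS_idealE ?(trans_le va le_ab) // -(coverS_idealE _ va).
- exact: minimalS_ideal_mono x0_min.
Qed.

Lemma exists_maxchain_ideal z :
  exists x0 s, maxchain le (ideal le z) (x0 :: s) /\ last x0 s = z.
Proof.
suff: forall n z, (#|lower z| < n)%N ->
    exists x0 s, maxchain le (ideal le z) (x0 :: s) /\ last x0 s = z.
  by apply; apply: ltnSn.
elim=> // n IHn {}z lower_z.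
have [b0 b0z | z_min] := pickP [pred b | strict le b z]; last first.
  by exists z, [::]; split => //; apply: maxchain_ideal1 => b; rewrite (negbT (z_min b)).
have [b bz] := exists_cover_below b0z.
have /card_lower_lt lt_bz : strict le b z by case/and4P: bz.
have [x0 [s [s_chain s_last]]] := IHn b (leq_trans lt_bz (ltnSE lower_z)).
exists x0, (rcons s z); rewrite last_rcons.
by split; first exact: maxchain_ideal_rcons s_chain s_last bz.
Qed.

Variables (w : T -> nat) (rho : T -> int).
Hypothesis rank_rho : rank_fun le w rho.

Lemma rank_fun_cover a b : Defs.cover le a b -> rho b = rho a + eps w a b.
Proof.
move=> ab; have [x0 [s [chain s_last]]] := exists_maxchain_ideal a.
rewrite -(rank_rho chain) -(rank_rho (maxchain_ideal_rcons chain s_last ab)).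
by rewrite weight_rcons s_last.
Qed.

Lemma rank_fun_minimal m : (forall b, ~~ strict le b m) -> rho m = 0.
Proof. by move=> m_min; rewrite -(rank_rho (maxchain_ideal1 m_min)) weight1. Qed.

Lemma rank_fun_add_cover a b :
  rho b = rho a + eps w a b -> rank_fun (add_cover le a b) w rho.
Proof.
move=> rho_ab; apply: rank_fun_connect => [u v /orP[/rank_fun_cover //|]|m m_bottom].
  by case/andP=> /eqP-> /eqP->.
apply: rank_fun_minimal => d; apply/negP => /exists_cover_below[c cm].
have /and4P[_ _ /andP[/negP cm_neq _] _] := cm.
by apply: cm_neq; rewrite (m_bottom c) //= cm.
Qed.

End PosetChains.

Lemma rank_fun_consistent (T : finType) (le : rel T) (w : T -> nat) (rho : T -> int) :
  rank_fun le w rho -> consistent le w.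
Proof. by move=> rank_rho z c1 c2 /rank_rho-> /rank_rho->. Qed.

Unset Implicit Arguments.

Theorem lemma3p1 (T : finType) (le : rel T) (w : T -> nat) (rho : T -> int)
  (Hposet : is_poset le) (Hlab : is_labeling w)
  (Hcons : consistent le w) (Hrho : rank_fun le w rho)
  (Hmono : forall u v, rho u < rho v -> (w u < w v)%N)
  (x y : T) (Hxy : ~~ le x y) (Hyx : ~~ le y x) (Hr : rho y = rho x + 1) :
  (consistent (add_cover le x y) w /\ rank_fun (add_cover le x y) w rho) /\
  (consistent (add_cover le y x) w /\ rank_fun (add_cover le y x) w rho).
Proof.
have [refl_le [anti_le trans_le]] := Hposet.
have w_xy : (w x < w y)%N by apply: Hmono; rewrite Hr ltrDl.
have rank_xy : rank_fun (add_cover le x y) w rho.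
  by apply: rank_fun_add_cover; rewrite // /eps w_xy.
have rank_yx : rank_fun (add_cover le y x) w rho.
  by apply: rank_fun_add_cover; rewrite // /eps ltnNge (ltnW w_xy) Hr addrK.
by split; split=> //;
  [apply: rank_fun_consistent rank_xy | apply: rank_fun_consistent rank_yx].
Qed.
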